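(* For all integers $n\ge0$, $r\ge0$ and every real $x\ne0$, the $r$th derivative of $\mathfrak{C}_n$ satisfies $$\mathfrak{C}_n^{(r)}(x)=\frac{r!}{x^r}\sum_{k=0}^{r}\binom rk(-1)^{r-k}\sum_{j_0+j_1+\cdots+j_k=n}\binom{n}{j_0,j_1,\dots,j_k}\mathfrak{C}_{j_0}(x)\mathfrak{C}_{j_1}(x)\cdots\mathfrak{C}_{j_k}(x),$$ where the inner sum runs over all tuples of non-negative integers $(j_0,\dots,j_k)$ with sum $n$.
   Context: For $n\ge1$ the central factorial is $x^{[n]}=x\,(x+\tfrac n2-1)(x+\tfrac n2-2)\cdots(x-\tfrac n2+1)$ (a product of $n$ factors), and $x^{[0]}=1$. The central factorial numbers of the second kind $T(n,k)$ ($0\le k\le n$) are defined by $x^n=\sum_{k=0}^n T(n,k)\,x^{[k]}$; equivalently $T(n,k)=\frac1{k!}\sum_{j=0}^k(-1)^j\binom kj\left(\frac k2-j\right)^n$, and $T(n,k)=0$ for $k>n$. The $n$th central Fubini-like polynomial is $\mathfrak{C}_n(x)=\sum_{k=0}^n k!\,T(n,k)\,x^k$. *)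

From HB Require Import structures.
From mathcomp Require Import all_boot all_order all_algebra.
Set Implicit Arguments. Unset Strict Implicit. Unset Printing Implicit Defensive.
Import Order.TTheory GRing.Theory Num.Theory.
Local Open Scope ring_scope.

Definition cfT (R : realFieldType) (n k : nat) : R :=
  (k`!%:R)^-1 * \sum_(j < k.+1)
      (-1) ^+ j * ('C(k, j))%:R * ((k%:R / 2%:R) - (j : nat)%:R) ^+ n.

Definition cfub (R : realFieldType) (n : nat) : {poly R} :=
  \sum_(k < n.+1) ((k`!)%:R * cfT R n k) *: 'X^k.

Definition multinom (m n : nat) (j : {ffun 'I_m -> 'I_n.+1}) : nat :=
  n`! %/ \prod_(i < m) (j i : nat)`!.

(* The exponential generating function of the central Fubini-like polynomials
   is F = 1 / (1 - y) with y = x (e^(t/2) - e^(-t/2)), because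
   (e^(t/2) - e^(-t/2))^k / k! generates the T(n, k). Hence F - 1 = F y and
   F (F - 1)^r = F^(r+1) y^r = y^r / (1 - y)^(r+1) = \sum_l 'C(l, r) y^l, whose
   n-th coefficient is x^r C_n^(r)(x) / (r! n!).  Expanding (F - 1)^r by the
   binomial theorem and reading the n-th coefficient of F^(k+1) as a
   multinomial convolution gives the formula.  All series are polynomials
   taken modulo t^(n+1). *)

From HB Require Import structures.
From mathcomp Require Import all_boot all_order all_algebra.
From mathcomp Require Import ring.
Import Order.TTheory GRing.Theory Num.Theory.
Set Implicit Arguments. Unset Strict Implicit. Unset Printing Implicit Defensive.
Local Open Scope ring_scope.

Section TruncatedCongruence.
Variables (R : nzRingType) (m : nat).
Implicit Types p q : {poly R}.

Definition eqmodX p q := take_poly m p = take_poly m q.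

Lemma eqmodXP p q : eqmodX p q <-> (forall i, (i < m)%N -> p`_i = q`_i).
Proof.
split=> [pq i lt_im | pq].
  by have := congr1 (fun s : {poly R} => s`_i) pq; rewrite /= !coef_take_poly lt_im.
by apply/polyP => i; rewrite !coef_take_poly; case: ifP => // /pq.
Qed.

Lemma eqmodX_coef p q i : eqmodX p q -> (i < m)%N -> p`_i = q`_i.
Proof. by move/eqmodXP; apply. Qed.

Lemma eqmodX_refl p : eqmodX p p. Proof. by []. Qed.

Lemma eqmodX_sym p q : eqmodX p q -> eqmodX q p. Proof. by []. Qed.

Lemma eqmodX_trans p q s : eqmodX p q -> eqmodX q s -> eqmodX p s.
Proof. exact: etrans. Qed.

Lemma eqmodXD p q p' q' : eqmodX p p' -> eqmodX q q' -> eqmodX (p + q) (p' + q').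
Proof. by rewrite /eqmodX !take_polyD => -> ->. Qed.

Lemma eqmodXN p p' : eqmodX p p' -> eqmodX (- p) (- p').
Proof. by move=> /eqmodXP pp'; apply/eqmodXP => i lt_im; rewrite !coefN pp'. Qed.

Lemma eqmodXM p q p' q' : eqmodX p p' -> eqmodX q q' -> eqmodX (p * q) (p' * q').
Proof.
move=> /eqmodXP pp' /eqmodXP qq'; apply/eqmodXP => i lt_im; rewrite !coefM.
apply: eq_bigr => j _; have le_ji : (j <= i)%N := ltnSE (ltn_ord j).
by rewrite pp' ?qq' // (leq_ltn_trans _ lt_im) ?leq_subr.
Qed.

Lemma eqmodXX p p' k : eqmodX p p' -> eqmodX (p ^+ k) (p' ^+ k).
Proof.
by move=> pp'; elim: k => [|k IHk] //; rewrite !exprS; apply: eqmodXM.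
Qed.

Lemma coef_exp_small p k i : p`_0 = 0 -> (i < k)%N -> (p ^+ k)`_i = 0.
Proof.
move=> p0 lt_ik; have p_X : p = drop_poly 1 p * 'X^1.
  have p0X : take_poly 1 p = 0 by apply/polyP => -[|j]; rewrite coef_take_poly coef0.
  by rewrite -{1}(poly_take_drop 1 p) p0X add0r.
by rewrite p_X exprMn_comm ?coefMXn ?lt_ik //; apply: commr_polyX.
Qed.

End TruncatedCongruence.

Section NegativeBinomialSeries.
Variables (R : comNzRingType) (m : nat) (y : {poly R}).
Hypothesis y0 : y`_0 = 0.

Definition geom_series := \sum_(l < m) y ^+ l.

(* The truncation of [y^r / (1 - y)^(r+1) = \sum_l 'C(l, r) y^l]. *)
Definition negbin_series r := \sum_(l < m) y ^+ l *+ 'C(l, r).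

Lemma geom_series_mul_1subr : eqmodX m (geom_series * (1 - y)) 1.
Proof.
have -> : geom_series * (1 - y) = 1 - y ^+ m.
  by rewrite mulrC -opprB mulNr -subrX1 opprB.
apply/eqmodXP => i lt_im; by rewrite coefB coef_exp_small // subr0.
Qed.

Lemma negbin_series0 : negbin_series 0 = geom_series.
Proof. by apply: eq_bigr => l _; rewrite bin0. Qed.

Lemma negbin_seriesS r :
  negbin_series r.+1 + y ^+ m *+ 'C(m, r.+1) =
  y * negbin_series r.+1 + y * negbin_series r.
Proof.
have shift s : y * negbin_series s = \sum_(l < m) y ^+ l.+1 *+ 'C(l, s).
  by rewrite mulr_sumr; apply: eq_bigr => l _; rewrite mulrnAr exprS.
rewrite !shift -big_split /=.
under eq_bigr do rewrite -mulrnDr -binS.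
have -> : \sum_(l < m) y ^+ l.+1 *+ 'C(l.+1, r.+1) =
    \sum_(l < m.+1) y ^+ l *+ 'C(l, r.+1) by rewrite big_ord_recl mulr0n add0r.
by rewrite big_ord_recr.
Qed.

Lemma negbin_series_step r :
  eqmodX m ((1 - y) * negbin_series r.+1) (y * negbin_series r).
Proof.
apply/eqmodXP => i lt_im.
have -> : (1 - y) * negbin_series r.+1 =
    y * negbin_series r - y ^+ m *+ 'C(m, r.+1).
  by rewrite mulrBl mul1r -[X in X - _](addrK (y ^+ m *+ 'C(m, r.+1)))
    negbin_seriesS; ring.
by rewrite coefB coefMn coef_exp_small // mul0rn subr0.
Qed.

Lemma negbin_series_mul_exp r :
  eqmodX m ((1 - y) ^+ r.+1 * negbin_series r) (y ^+ r).
Proof.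
elim: r => [|r IHr].
  by rewrite expr1 negbin_series0 mulrC expr0; exact: geom_series_mul_1subr.
have -> : (1 - y) ^+ r.+2 * negbin_series r.+1 =
    (1 - y) * negbin_series r.+1 * (1 - y) ^+ r.+1 by rewrite exprS; ring.
apply: eqmodX_trans (eqmodXM (negbin_series_step r) (eqmodX_refl _ _)) _.
rewrite -mulrA [y ^+ r.+1]exprS [negbin_series r * _]mulrC.
exact: eqmodXM (eqmodX_refl _ _) IHr.
Qed.

Lemma geom_series_mul_subr1_exp r :
  eqmodX m (geom_series * (geom_series - 1) ^+ r) (negbin_series r).
Proof.
set g := geom_series; have g1 := geom_series_mul_1subr.
have gY : eqmodX m (g - 1) (g * y).
  have -> : g * y = g - g * (1 - y) by ring.
  exact: eqmodXD (eqmodX_refl _ _) (eqmodXN (eqmodX_sym g1)).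
apply: eqmodX_trans (eqmodXM (eqmodX_refl _ g) (eqmodXX r gY)) _.
rewrite exprMn mulrA -exprS.
have inv_negbin := eqmodX_sym (negbin_series_mul_exp r).
apply: eqmodX_trans (eqmodXM (eqmodX_refl _ _) inv_negbin) _.
rewrite mulrA -exprMn.
apply: eqmodX_trans (eqmodXM (eqmodXX r.+1 g1) (eqmodX_refl _ _)) _.
by rewrite expr1n mul1r; apply: eqmodX_refl.
Qed.

End NegativeBinomialSeries.

Lemma natr_fact_neq0 (R : numDomainType) k : (k`!%:R : R) != 0.
Proof. by rewrite pnatr_eq0 -lt0n fact_gt0. Qed.

Section TruncatedExponential.
Variables (R : numFieldType) (m : nat).

Definition expt (a : R) : {poly R} := \poly_(i < m) (a ^+ i / i`!%:R).

Lemma expt_mul a b : eqmodX m (expt a * expt b) (expt (a + b)).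
Proof.
apply/eqmodXP => i lt_im; rewrite coefM coef_poly lt_im addrC exprDn mulr_suml.
apply: eq_bigr => j _; have le_ji : (j <= i)%N := ltnSE (ltn_ord j).
rewrite !coef_poly (leq_ltn_trans le_ji lt_im) (leq_ltn_trans (leq_subr j i) lt_im).
rewrite -[_ *+ 'C(i, j)]mulr_natr -(bin_fact le_ji) !natrM.
by field; rewrite !natr_fact_neq0 pnatr_eq0 -lt0n bin_gt0.
Qed.

Lemma expt_exp a k : eqmodX m (expt a ^+ k) (expt (k%:R * a)).
Proof.
elim: k => [|k IHk].
  apply/eqmodXP => i lt_im; rewrite expr0 mul0r coef1 coef_poly lt_im.
  by case: i {lt_im} => [|i]; rewrite ?expr0 ?divr1 // expr0n mul0r.
rewrite exprS; apply: eqmodX_trans (eqmodXM (eqmodX_refl _ (expt a)) IHk) _.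
by rewrite -natr1 mulrDl mul1r addrC; apply: expt_mul.
Qed.

End TruncatedExponential.

Definition sinht (R : numFieldType) m : {poly R} := expt m 2^-1 - expt m (- 2^-1).

Lemma coef_sinht0 (R : numFieldType) m : (sinht R m)`_0 = 0.
Proof.
by rewrite coefB !coef_poly; case: m => [|m]; rewrite ?subrr //= !expr0 subrr.
Qed.

Lemma coef_sinht_exp (R : realFieldType) m k i : (i < m)%N ->
  (sinht R m ^+ k)`_i = k`!%:R * cfT R i k / i`!%:R.
Proof.
move=> lt_im; rewrite exprBn coef_sum /cfT mulrA mulfV ?natr_fact_neq0 // mul1r.
rewrite mulr_suml; apply: eq_bigr => j _; have le_jk : (j <= k)%N := ltnSE (ltn_ord j).
rewrite coefMn -mulrA -(rmorph_sign (@polyC R)) mul_polyC coefZ.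
rewrite (eqmodX_coef (eqmodXM (expt_exp m _ _) (expt_exp m _ _)) lt_im).
rewrite (eqmodX_coef (expt_mul m _ _) lt_im) coef_poly lt_im.
have -> : (k - j)%:R * 2^-1 + j%:R * - 2^-1 = k%:R / 2%:R - j%:R :> R.
  by rewrite natrB //; field.
by rewrite -mulr_natr; ring.
Qed.

Lemma horner_derivn_sum (R : comNzRingType) s (a : nat -> R) r x :
  ((\sum_(i < s) a i *: 'X^i)^`(r)).[x] * x ^+ r =
  r`!%:R * \sum_(i < s) 'C(i, r)%:R * a i * x ^+ i.
Proof.
have derivn0p : (0 : {poly R})^`(r) = 0 by rewrite derivn_poly0 ?size_poly0.
rewrite (big_morph (derivn r) (derivnD r) derivn0p) horner_sum mulr_suml mulr_sumr.
apply: eq_bigr => i _; rewrite derivnZ hornerZ derivnXn hornerMn hornerXn.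
have [le_ri | lt_ir] := leqP r i; last first.
  by rewrite ffact_small // bin_small // mulr0n !(mulr0, mul0r).
have -> : x ^+ i = x ^+ (i - r) * x ^+ r by rewrite -exprD subnK.
rewrite -bin_ffact mulrnA -[_ *+ r`!]mulr_natr -[_ *+ 'C(i, r)]mulr_natr; ring.
Qed.

Lemma coef_mul_subr1_exp (R : comNzRingType) (p : {poly R}) r n :
  (p * (p - 1) ^+ r)`_n =
  \sum_(k < r.+1) 'C(r, k)%:R * (-1) ^+ (r - k) * (p ^+ k.+1)`_n.
Proof.
rewrite addrC exprDn mulr_sumr coef_sum; apply: eq_bigr => k _.
rewrite mulrnAr coefMn -(rmorph_sign (@polyC R)) -mulrA mulrCA mul_polyC coefZ.
by rewrite -exprS -mulr_natl; ring.
Qed.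

Lemma dvdn_prod_fact (I : Type) (r : seq I) (F : I -> nat) :
  (\prod_(i <- r) (F i)`! %| (\sum_(i <- r) F i)`!)%N.
Proof.
elim: r => [|a r IHr]; first by rewrite !big_nil.
rewrite !big_cons; apply: dvdn_trans (dvdn_mul (dvdnn _) IHr) _.
by rewrite -(bin_fact (leq_addr (\sum_(i <- r) F i) (F a))) addKn dvdn_mull.
Qed.

Lemma coef_egf_exp_multinom (R : numFieldType) n k (c : nat -> R) :
  n`!%:R * ((\poly_(j < n.+1) (c j / j`!%:R)) ^+ k.+1)`_n =
  \sum_(j : {ffun 'I_k.+1 -> 'I_n.+1} | (\sum_(i < k.+1) (j i : nat))%N == n)
    (multinom j)%:R * \prod_(i < k.+1) c (j i).
Proof.
rewrite poly_def; set P := \sum_(j < n.+1) _.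
have -> : P ^+ k.+1 = \prod_(i < k.+1) P by rewrite prodr_const card_ord.
rewrite bigA_distr_bigA /=.
rewrite coef_sum mulr_sumr [RHS]big_mkcond /=; apply: eq_bigr => j _.
rewrite -[\prod_i _](eq_bigr _ (fun i _ => mul_polyC _ _)) big_split /=.
rewrite -rmorph_prod prodrXr coefCM coefXn eq_sym.
case: eqP => [sum_j | _]; last by rewrite !mulr0.
rewrite mulr1 /multinom natr_div; last first.
- by rewrite unitfE pnatr_eq0 -lt0n prodn_gt0 // => i; apply: fact_gt0.
- by rewrite -[in X in (_ %| X)%N]sum_j dvdn_prod_fact.
rewrite prodf_div natr_prod; field.
by rewrite prodf_seq_neq0; apply/allP => i _; apply: natr_fact_neq0.
Qed.

Section CentralFubiniEGF.
Variables (R : realFieldType) (x : R).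

Definition cfub_egf m : {poly R} := \poly_(j < m) ((cfub R j).[x] / j`!%:R).

Lemma cfub_egf_geom m : eqmodX m (cfub_egf m) (geom_series m (x *: sinht R m)).
Proof.
apply/eqmodXP => i lt_im; rewrite coef_poly lt_im coef_sum /cfub horner_sum.
under eq_bigr do rewrite hornerZ hornerXn.
rewrite mulr_suml.
rewrite (big_ord_widen m (fun k => k`!%:R * cfT R i k * x ^+ k / i`!%:R) lt_im).
rewrite big_mkcond /=; apply: eq_bigr => k _.
rewrite exprZn coefZ; case: ifP => [le_ki | /negbT].
  by rewrite coef_sinht_exp //; ring.
by rewrite -ltnNge => lt_ik; rewrite coef_exp_small ?coef_sinht0 ?mulr0.
Qed.

Lemma coef_negbin_cfub m r n : (n < m)%N ->
  (negbin_series m (x *: sinht R m) r)`_n =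
  \sum_(l < m) 'C(l, r)%:R * (l`!%:R * cfT R n l) * x ^+ l / n`!%:R.
Proof.
move=> lt_nm; rewrite coef_sum; apply: eq_bigr => l _.
by rewrite coefMn exprZn coefZ coef_sinht_exp // -mulr_natl; ring.
Qed.

Lemma horner_derivn_cfub n r :
  ((cfub R n)^`(r)).[x] * x ^+ r =
  r`!%:R * n`!%:R * (negbin_series n.+1 (x *: sinht R n.+1) r)`_n.
Proof.
rewrite /cfub (horner_derivn_sum _ (fun k => k`!%:R * cfT R n k)).
rewrite coef_negbin_cfub // -mulrA; congr (_ * _).
rewrite mulr_sumr; apply: eq_bigr => l _.
by field; rewrite natr_fact_neq0.
Qed.

Lemma coef_cfub_egf_mul_subr1_exp n r :
  (cfub_egf n.+1 * (cfub_egf n.+1 - 1) ^+ r)`_n =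
  (negbin_series n.+1 (x *: sinht R n.+1) r)`_n.
Proof.
have y0 : (x *: sinht R n.+1)`_0 = 0 by rewrite coefZ coef_sinht0 mulr0.
have egf_geom := cfub_egf_geom n.+1.
apply: eqmodX_coef (ltnSn n).
apply: eqmodX_trans (geom_series_mul_subr1_exp n.+1 y0 r).
exact: eqmodXM egf_geom (eqmodXX r (eqmodXD egf_geom (eqmodX_refl _ _))).
Qed.

End CentralFubiniEGF.

Theorem theorem7 (R : realFieldType) (n r : nat) (x : R) :
  x != 0 ->
  ((cfub R n)^`(r)).[x] =
    (r`!)%:R / x ^+ r *
    \sum_(k < r.+1)
      ('C(r, k))%:R * (-1) ^+ (r - k) *
      \sum_(j : {ffun 'I_k.+1 -> 'I_n.+1} | (\sum_(i < k.+1) (j i : nat))%N == n)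
        (multinom j)%:R * \prod_(i < k.+1) (cfub R (j i)).[x].
Proof.
move=> x_neq0; have xr_neq0 : x ^+ r != 0 by rewrite expf_neq0.
under eq_bigr do rewrite -(coef_egf_exp_multinom n _ (fun j => (cfub R j).[x])).
rewrite -/(cfub_egf x n.+1).
have -> : \sum_(k < r.+1) 'C(r, k)%:R * (-1) ^+ (r - k) *
    (n`!%:R * (cfub_egf x n.+1 ^+ k.+1)`_n) =
    n`!%:R * (cfub_egf x n.+1 * (cfub_egf x n.+1 - 1) ^+ r)`_n.
  by rewrite coef_mul_subr1_exp mulr_sumr; apply: eq_bigr => k _; ring.
rewrite coef_cfub_egf_mul_subr1_exp; apply: (mulIf xr_neq0).
by rewrite horner_derivn_cfub; field.
Qed.
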